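(* Let $G$ be a complete bipartite graph (with both parts nonempty). Then $c(G) = \min\{2, \delta(G)\}$, $c_{V,\mathrm{r}}(G) = \delta(G)$, and $c_V(G) = c_{E,\mathrm{r}}(G) = c_E(G) = \Delta(G)$.
   Context: $\delta(G)$ and $\Delta(G)$ denote minimum and maximum degree. In all games the players alternate turns, cops first; initially the cop player places all cops, then the robber player places the robber on a vertex (several pieces may share a position). In a turn each piece of the moving player may stay or make one move (no obligation to move). The robber always sits on vertices and moves to an adjacent vertex; $v_r$ denotes his current vertex. Classical version: cops on vertices moving to adjacent vertices; cops win if a cop is on $v_r$; $c(G)$ is the least number of cops that can force a win in finitely many turns. Vertex version: cops on vertices; cops win when every neighbor of $v_r$ is occupied by a cop; number $c_V(G)$. Edge version: cops sit on edges; a cop on edge $e$ may move to any edge sharing an endpoint with $e$; cops win when every edge incident to $v_r$ is occupied; number $c_E(G)$. Restrictive vertex version: as the vertex version, but after each robber turn (including his initial placement) no cop may be on $v_r$; in particular the robber may not move onto a cop-occupied vertex, and if a cop moves onto $v_r$ the robber must leave in his next turn; number $c_{V,\mathrm{r}}(G)$. Restrictive edge version: as the edge version, but the robber may not move along an edge currently occupied by a cop; number $c_{E,\mathrm{r}}(G)$. *)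

From mathcomp Require Import all_boot all_order.
Set Implicit Arguments. Unset Strict Implicit. Unset Printing Implicit Defensive.

(* A finite simple graph is given by a relation [e : rel T] on a finType [T]. *)

Definition deg (T : finType) (e : rel T) (v : T) : nat := #|[set u | e v u]|.
(* minimum degree (for nonempty T; the seed #|T| exceeds every degree) *)
Definition mindeg (T : finType) (e : rel T) : nat :=
  \big[minn/#|T|]_(v : T) deg e v.
Definition maxdeg (T : finType) (e : rel T) : nat := \max_(v : T) deg e v.

Definition complete_bipartite (T : finType) (e : rel T) (A : {set T}) : Prop :=
  [/\ A != set0, ~: A != set0 & forall x y, e x y = ((x \in A) != (y \in A))].

(** Generic cops-and-robber game.
   - [P] : type of cop positions, [cvalid] the legal positions,
   - [cmove p p'] : a cop at p may stay or move to p' in one turn,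
   - [won O r] : cops have won when the set of occupied positions is [O]
                 and the robber is at [r],
   - [rmove O r r'] : robber at r may (stay or) move to r' given occupied set O,
   - [rstart O r] : robber may be placed at r given occupied set O.
   Cops move first (after the initial placement); the win condition is
   checked after every move. *)
Section Game.
Variables (T P : finType) (cvalid : pred P) (cmove : rel P)
  (won : pred P -> T -> bool) (rmove : pred P -> T -> T -> bool)
  (rstart : pred P -> T -> bool).

Definition occ (k : nat) (c : {ffun 'I_k -> P}) : pred P :=
  fun p => [exists i, c i == p].

(* [cwin c r] : cops (to move, in configuration c, robber at r, game not yet
   won) can force a win in finitely many turns. *)
Inductive cwin (k : nat) : {ffun 'I_k -> P} -> T -> Prop :=
| CWin (c c' : {ffun 'I_k -> P}) (r : T) :
    (forall i, cmove (c i) (c' i)) ->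
    (won (occ c') r \/
     (forall r', rmove (occ c') r r' -> won (occ c') r' \/ cwin c' r')) ->
    cwin c r.

Definition cops_win (k : nat) : Prop :=
  exists c : {ffun 'I_k -> P}, (forall i, cvalid (c i)) /\
    forall r, rstart (occ c) r -> won (occ c) r \/ cwin c r.

Definition game_number (n : nat) : Prop :=
  cops_win n /\ forall m, m < n -> ~ cops_win m.
End Game.

Section Versions.
Variables (T : finType) (e : rel T).

(* edges as 2-element vertex sets *)
Definition is_edge (S : {set T}) : bool :=
  [exists x, exists y, e x y && (S == [set x; y])].

Definition vstep : rel T := fun x y => (x == y) || e x y.
Definition estep : rel {set T} :=
  fun S S' => (S == S') || (is_edge S' && ~~ [disjoint S & S']).

Definition c_number (n : nat) : Prop :=
  game_number (P := T) predT vstep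
    (fun O r => O r) (fun _ => vstep) (fun _ _ => true) n.

Definition v_won (O : pred T) (r : T) : bool := [forall u, e r u ==> O u].
Definition cV_number (n : nat) : Prop :=
  game_number (P := T) predT vstep v_won (fun _ => vstep) (fun _ _ => true) n.

Definition cVr_number (n : nat) : Prop :=
  game_number (P := T) predT vstep v_won
    (fun O r r' => vstep r r' && ~~ O r') (fun O r => ~~ O r) n.

Definition e_won (O : pred {set T}) (r : T) : bool :=
  [forall u, e r u ==> O [set r; u]].
Definition cE_number (n : nat) : Prop :=
  game_number is_edge estep e_won (fun _ => vstep) (fun _ _ => true) n.

Definition cEr_number (n : nat) : Prop :=
  game_number is_edge estep e_won
    (fun O r r' => (r == r') || (e r r' && ~~ O [set r; r']))
    (fun _ _ => true) n.
End Versions.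

(* Two vertices from different parts dominate a complete bipartite graph (one vertex of the
   smaller part [A] does when [#|A| = 1]), while a single cop facing parts of size at least 2
   is evaded by always standing on a vertex neither equal nor adjacent to him.  In the vertex
   and edge games, [#|~: A|] cops occupy (edges meeting) every vertex of the larger part and,
   once the robber is placed, re-aim at his whole neighbourhood, which fits since
   [#|A| <= #|~: A|]; fewer cops never cover the [#|~: A|] neighbours of a vertex of [A].  In
   the restrictive vertex game [#|A|] cops on [A] force the robber to start in [~: A], where
   he is already surrounded; with fewer cops than the minimum degree no vertex is ever
   surrounded, so he can always step to a free vertex. *)
From mathcomp Require Import all_boot all_order.
Set Implicit Arguments. Unset Strict Implicit. Unset Printing Implicit Defensive.

Section GameStrategies.
Variables (T P : finType) (cvalid : pred P) (cmove : rel P)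
  (won : pred P -> T -> bool) (rmove : pred P -> T -> T -> bool)
  (rstart : pred P -> T -> bool).
Local Notation cops_win := (cops_win cvalid cmove won rmove rstart).
Local Notation cwin := (cwin cmove won rmove).

Lemma cops_win_one_round k (c : {ffun 'I_k -> P}) :
  (forall i, cvalid (c i)) ->
  (forall r, rstart (occ c) r -> won (occ c) r \/
     exists2 c' : {ffun 'I_k -> P}, (forall i, cmove (c i) (c' i)) & won (occ c') r) ->
  cops_win k.
Proof.
move=> c_valid c_wins; exists c; split=> // r /c_wins [-> | [c' c_c' c'_won]].
  by left.
by right; apply: (CWin c_c'); left.
Qed.

Lemma not_cops_win_evasion k (I : {ffun 'I_k -> P} -> T -> Prop) :
  (forall c : {ffun 'I_k -> P}, (forall i, cvalid (c i)) ->
     exists r, [/\ rstart (occ c) r, ~~ won (occ c) r & I c r]) ->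
  (forall (c c' : {ffun 'I_k -> P}) r, I c r -> (forall i, cmove (c i) (c' i)) ->
     ~~ won (occ c') r /\
     exists r', [/\ rmove (occ c') r r', ~~ won (occ c') r' & I c' r']) ->
  ~ cops_win k.
Proof.
move=> I_start I_step [c [c_valid c_wins]].
have [r [r_start r_safe Icr]] := I_start c c_valid.
have cwin_I : forall c r, cwin c r -> I c r -> False.
  (* The recursive occurrence of [cwin] sits under [\/] and a binder, so the generated
     induction principle gives no hypothesis for it: recurse by hand. *)
  fix IH 3 => c0 r0 [c1 c2 r1 c12 c2_wins] I1.
  have [r1_safe [r' [r1_r' r'_safe I2]]] := I_step c1 c2 r1 I1 c12.
  case: c2_wins => [won_r1 | c2_wins]; first by rewrite won_r1 in r1_safe.
  case: (c2_wins r' r1_r') => [won_r' | cw]; first by rewrite won_r' in r'_safe.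
  exact: IH _ _ cw I2.
case: (c_wins r r_start) => [won_r | cw]; first by rewrite won_r in r_safe.
exact: cwin_I cw Icr.
Qed.

Lemma not_cops_win_stay_put k v :
  (forall c : {ffun 'I_k -> P}, ~~ won (occ c) v) ->
  (forall O, rstart O v) -> (forall O, rmove O v v) -> ~ cops_win k.
Proof.
move=> v_safe v_start v_stay.
apply: (@not_cops_win_evasion k (fun _ r => r = v)) => [c _ | c c' r -> _].
  by exists v; rewrite v_safe.
by rewrite v_safe; split=> //; exists v; rewrite v_safe.
Qed.

End GameStrategies.

Lemma card_occ (P : finType) k (c : {ffun 'I_k -> P}) : #|[set p | occ c p]| <= k.
Proof.
have occ_sub : [set p | occ c p] \subset [set c i | i in 'I_k].
  by apply/subsetP => p; rewrite inE => /existsP [i /eqP <-]; apply: imset_f.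
by rewrite (leq_trans (subset_leq_card occ_sub)) // (leq_trans (leq_imset_card _ _)) ?card_ord.
Qed.

Lemma occ0 (P : finType) (c : {ffun 'I_0 -> P}) p : occ c p = false.
Proof. by apply/existsP => [[[]]]. Qed.

Lemma occ1 (P : finType) (c : {ffun 'I_1 -> P}) p : occ c p = (c ord0 == p).
Proof. by apply/existsP/eqP => [[i /eqP <-] | <-]; [rewrite (ord1 i) | exists ord0]. Qed.

Lemma occ_ffun (P : finType) k (f : 'I_k -> P) i : occ [ffun j => f j] (f i).
Proof. by apply/existsP; exists i; rewrite ffunE. Qed.

Lemma ord_onto_set (T : finType) (S : {set T}) k :
  S != set0 -> #|S| <= k ->
  exists2 g : 'I_k -> T, (forall i, g i \in S) & forall u, u \in S -> exists i, g i = u.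
Proof.
case/set0Pn => x0 Sx0 S_le_k; exists (fun i => nth x0 (enum S) i) => [i | u Su].
  have [i_lt | i_ge] := ltnP i (size (enum S)); last by rewrite nth_default.
  by rewrite -mem_enum mem_nth.
have u_idx : index u (enum S) < k by rewrite (leq_trans _ S_le_k) // cardE index_mem mem_enum.
by exists (Ordinal u_idx); rewrite nth_index ?mem_enum.
Qed.

Section Graph.
Variables (T : finType) (e : rel T).

Local Notation c_cops_win :=
  (cops_win (P := T) predT (vstep e) (fun O r => O r) (fun _ => vstep e) (fun _ _ => true)).
Local Notation vr_cops_win :=
  (cops_win (P := T) predT (vstep e) (v_won e)
     (fun O r r' => vstep e r r' && ~~ O r') (fun O r => ~~ O r)).

Lemma mindeg_le_deg v : mindeg e <= deg e v.
Proof.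
rewrite /mindeg; elim: (index_enum T) (mem_index_enum v) => // u s IH.
by rewrite inE big_cons geq_min => /predU1P [-> | /IH ->]; rewrite ?leqnn ?orbT.
Qed.

Lemma mindeg_le_card : mindeg e <= #|T|.
Proof.
apply: (big_ind (fun x => x <= #|T|)) => // [x y x_le _ | v _]; last exact: max_card.
by rewrite geq_min x_le.
Qed.

Lemma leq_mindeg m : m <= #|T| -> (forall v, m <= deg e v) -> m <= mindeg e.
Proof. by move=> m_le m_deg; apply: (big_ind (leq m)) => // x y; rewrite leq_min => -> ->. Qed.

Lemma v_won_deg_le k (c : {ffun 'I_k -> T}) r : v_won e (occ c) r -> deg e r <= k.
Proof.
move=> /forallP r_won; rewrite (leq_trans _ (card_occ c)) //.
by apply/subset_leq_card/subsetP => u; rewrite !inE => ru; have := r_won u; rewrite ru.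
Qed.

Lemma e_won_deg_le k (c : {ffun 'I_k -> {set T}}) r : e_won e (occ c) r -> deg e r <= k.
Proof.
move=> /forallP r_won; rewrite (leq_trans _ (card_occ c)) //.
have -> : deg e r = #|[set [set r; u] | u in [set u | e r u]]|.
  rewrite card_in_imset // => u v _ _ ruv.
  have : u \in [set r; v] by rewrite -ruv !inE eqxx orbT.
  rewrite !inE => /orP [/eqP ur | /eqP //].
  have : v \in [set r; u] by rewrite ruv !inE eqxx orbT.
  by rewrite ur !inE orbb => /eqP ->.
apply/subset_leq_card/subsetP => S /imsetP [u]; rewrite inE => ru ->.
by rewrite inE; have := r_won u; rewrite ru.
Qed.

Lemma v_cops_lose_lt_deg cvalid cmove (rmove : pred T -> T -> T -> bool) m v :
  m < deg e v -> (forall O, rmove O v v) ->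
  ~ cops_win cvalid cmove (v_won e) rmove (fun _ _ => true) m.
Proof.
move=> m_lt v_stay; apply: (not_cops_win_stay_put (v := v)) => // c.
by apply/negP => /v_won_deg_le; rewrite leqNgt m_lt.
Qed.

Lemma e_cops_lose_lt_deg cvalid cmove (rmove : pred {set T} -> T -> T -> bool) m v :
  m < deg e v -> (forall O, rmove O v v) ->
  ~ cops_win cvalid cmove (e_won e) rmove (fun _ _ => true) m.
Proof.
move=> m_lt v_stay; apply: (not_cops_win_stay_put (v := v)) => // c.
by apply/negP => /e_won_deg_le; rewrite leqNgt m_lt.
Qed.

Lemma vr_cops_lose_lt_mindeg m : m < mindeg e -> ~ vr_cops_win m.
Proof.
move=> m_lt; have never_won (c : {ffun 'I_m -> T}) r : ~~ v_won e (occ c) r.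
  by apply/negP => /v_won_deg_le; rewrite leqNgt (leq_trans m_lt) ?mindeg_le_deg.
apply: (@not_cops_win_evasion _ _ _ _ _ _ _ m (fun _ _ => True)) => [c _ | c c' r _ _].
  have [r r_free] : exists r, ~~ occ c r.
    apply/existsP; rewrite -negb_forall; apply: contraTN m_lt => /forallP all_occ.
    rewrite -leqNgt (leq_trans mindeg_le_card) // (leq_trans _ (card_occ c)) //.
    by apply/subset_leq_card/subsetP => u _; rewrite inE all_occ.
  by exists r; rewrite never_won.
split=> //; have [r_occ | r_free] := boolP (occ c' r); last first.
  by exists r; rewrite /vstep eqxx r_free never_won.
have := never_won c' r; rewrite negb_forall => /existsP [u].
rewrite negb_imply => /andP [ru u_free].
by exists u; rewrite /vstep ru orbT u_free never_won.
Qed.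

Lemma c_dominating_cops_win k (c : {ffun 'I_k -> T}) :
  (forall r, exists i, vstep e (c i) r) -> c_cops_win k.
Proof.
move=> c_dom; apply: (@cops_win_one_round _ _ _ _ _ _ _ _ c) => // r _; right.
have [i ci_r] := c_dom r.
exists [ffun j => if vstep e (c j) r then r else c j] => [j | ].
  by rewrite ffunE; case: ifP; rewrite // /vstep eqxx.
by apply/existsP; exists i; rewrite ffunE ci_r.
Qed.

Lemma c_no_cops_lose : T -> ~ c_cops_win 0.
Proof.
by move=> v; apply: (not_cops_win_stay_put (v := v)) => // [c | O]; rewrite ?occ0 /vstep ?eqxx.
Qed.

Lemma is_edge_of x y : e x y -> is_edge e [set x; y].
Proof. by move=> xy; apply/existsP; exists x; apply/existsP; exists y; rewrite xy eqxx. Qed.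

Lemma estep_meet (S S' : {set T}) z : is_edge e S' -> z \in S -> z \in S' -> estep e S S'.
Proof.
move=> S'_edge zS zS'; apply/orP; right; rewrite S'_edge /=.
by apply/negP => /disjointFr /(_ zS); rewrite zS'.
Qed.

Section CompleteBipartite.
Variables (A : {set T}) (a b : T).
Hypotheses (e_bip : forall x y, e x y = ((x \in A) != (y \in A)))
  (aA : a \in A) (bNA : b \notin A) (card_A_le : #|A| <= #|~: A|).

Let A_neq0 : A != set0. Proof. by apply/set0Pn; exists a. Qed.
Let AC_neq0 : ~: A != set0. Proof. by apply/set0Pn; exists b; rewrite inE. Qed.

Lemma deg_bip x : deg e x = if x \in A then #|~: A| else #|A|.
Proof.
rewrite /deg; case: ifP => xA; apply: eq_card => u;
  by rewrite !inE e_bip xA ?negbK.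
Qed.

Lemma mindeg_bip : mindeg e = #|A|.
Proof.
apply/eqP; rewrite eqn_leq (leq_trans (mindeg_le_deg b)) ?deg_bip ?(negbTE bNA) //.
by rewrite leq_mindeg ?max_card // => v; rewrite deg_bip; case: ifP.
Qed.

Lemma maxdeg_bip : maxdeg e = #|~: A|.
Proof.
apply/eqP; rewrite eqn_leq; apply/andP; split.
  by apply/bigmax_leqP => v _; rewrite deg_bip; case: ifP.
by have := leq_bigmax (F := deg e) a; rewrite deg_bip aA.
Qed.

Lemma exists_same_side p : 2 <= #|A| -> exists2 q, p != q & (p \in A) = (q \in A).
Proof.
move=> A_ge2; pose S := if p \in A then A else ~: A.
have S_ge2 : 2 <= #|S| by rewrite /S; case: ifP => // _; apply: leq_trans card_A_le.
have pS : p \in S by rewrite /S; case: ifP => pA; rewrite ?inE ?pA.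
have /set0Pn [q] : S :\ p != set0.
  by rewrite -card_gt0; move: S_ge2; rewrite (cardsD1 p S) pS add1n ltnS.
rewrite !inE => /andP [qp qS]; exists q; first by rewrite eq_sym.
by move: qS; rewrite /S; case: (p \in A) => [-> | ]; rewrite // inE => /negbTE.
Qed.

Lemma c_two_cops_win_bip : c_cops_win 2.
Proof.
apply: (@c_dominating_cops_win 2 [ffun i : 'I_2 => if val i == 0 then a else b]) => r.
have [rA | rNA] := boolP (r \in A); [exists ord_max | exists ord0];
  by rewrite ffunE /= /vstep e_bip ?rA ?(negbTE rNA) ?(negbTE bNA) ?aA orbT.
Qed.

Lemma c_one_cop_wins_bip : #|A| = 1 -> c_cops_win 1.
Proof.
move=> /eqP /cards1P [a' A_a']; apply: (@c_dominating_cops_win 1 [ffun=> a]) => r.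
exists ord0; rewrite ffunE /vstep e_bip aA.
have [rA | rNA] := boolP (r \in A); last by rewrite orbT.
by move: aA rA; rewrite A_a' !inE => /eqP -> /eqP ->; rewrite eqxx.
Qed.

Lemma c_one_cop_loses_bip : 2 <= #|A| -> ~ c_cops_win 1.
Proof.
move=> A_ge2; have same_side_nonadj p q : (p \in A) = (q \in A) -> e p q = false.
  by move=> pq; rewrite e_bip pq eqxx.
apply: (@not_cops_win_evasion _ _ _ _ _ _ _ 1 (fun c r => ~~ vstep e (c ord0) r)).
  move=> c _; have [q qp q_side] := exists_same_side (c ord0) A_ge2.
  by exists q; rewrite occ1 /vstep (negbTE qp) same_side_nonadj.
move=> c c' r c_far c_c'; have c'_r : c' ord0 != r.
  by apply: contraNneq c_far => <-; exact: c_c'.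
rewrite occ1 c'_r; split=> //.
have [c'_adj | c'_far] := boolP (vstep e (c' ord0) r); last first.
  by exists r; rewrite occ1 c'_r c'_far /vstep eqxx.
have [q qc' q_side] := exists_same_side (c' ord0) A_ge2.
have c'_nbr : e (c' ord0) r by move: c'_adj; rewrite /vstep (negbTE c'_r).
have q_nbr : e r q by rewrite e_bip -q_side eq_sym -e_bip.
by exists q; rewrite occ1 /vstep (negbTE qc') (same_side_nonadj _ _ q_side) q_nbr orbT.
Qed.

Lemma c_number_bip : c_number e (minn 2 (mindeg e)).
Proof.
rewrite mindeg_bip.
have [A_ge2 | A_le1] := leqP 2 #|A|.
  split; first exact: c_two_cops_win_bip.
  by case=> [|[|]] // _; [exact: c_no_cops_lose | exact: c_one_cop_loses_bip].
have A1 : #|A| = 1 by apply/eqP; rewrite eqn_leq -ltnS A_le1 card_gt0.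
rewrite A1; split; first exact: c_one_cop_wins_bip.
by case=> // _; exact: c_no_cops_lose.
Qed.

Lemma v_cops_win_bip :
  cops_win predT (vstep e) (v_won e) (fun _ => vstep e) (fun _ _ => true) #|~: A|.
Proof.
have [gB gB_B gB_onto] := ord_onto_set AC_neq0 (leqnn #|~: A|).
have [gA gA_A gA_onto] := ord_onto_set A_neq0 card_A_le.
apply: (@cops_win_one_round _ _ _ _ _ _ _ _ [ffun i => gB i]) => // r _.
have [rA | rNA] := boolP (r \in A).
  left; apply/forallP => u; apply/implyP.
  by rewrite e_bip rA /= -in_setC => /gB_onto [i <-]; apply: occ_ffun.
right; exists [ffun i => gA i] => [i | ].
  by move: (gB_B i); rewrite !ffunE /vstep e_bip gA_A inE => /negbTE ->; rewrite orbT.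
apply/forallP => u; apply/implyP.
by rewrite e_bip (negbTE rNA) /= negbK => /gA_onto [i <-]; apply: occ_ffun.
Qed.

Lemma vr_cops_win_bip : vr_cops_win #|A|.
Proof.
have [gA gA_A gA_onto] := ord_onto_set A_neq0 (leqnn #|A|).
apply: (@cops_win_one_round _ _ _ _ _ _ _ _ [ffun i => gA i]) => // r r_free; left.
have rNA : r \notin A.
  by apply: contraNN r_free => rA; have [i <-] := gA_onto r rA; apply: occ_ffun.
apply/forallP => u; apply/implyP.
by rewrite e_bip (negbTE rNA) /= negbK => /gA_onto [i <-]; apply: occ_ffun.
Qed.

Lemma e_cops_win_bip rmove rstart :
  cops_win (is_edge e) (estep e) (e_won e) rmove rstart #|~: A|.
Proof.
have [gB gB_B gB_onto] := ord_onto_set AC_neq0 (leqnn #|~: A|).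
have [gA gA_A gA_onto] := ord_onto_set A_neq0 card_A_le.
have e_gAgB i : e (gA i) (gB i) by move: (gB_B i); rewrite e_bip gA_A inE.
apply: (@cops_win_one_round _ _ _ _ _ _ _ _ [ffun i => [set gA i; gB i]]).
  by move=> i; rewrite ffunE; apply/is_edge_of/e_gAgB.
move=> r _; right; have [rA | rNA] := boolP (r \in A).
  exists [ffun i => [set r; gB i]] => [i | ].
    rewrite !ffunE (@estep_meet _ _ (gB i)) ?is_edge_of ?setU11 ?setU1r ?set11 //.
    by move: (gB_B i); rewrite e_bip rA inE => /negbTE ->.
  apply/forallP => u; apply/implyP; rewrite e_bip rA /= -in_setC => /gB_onto [i <-].
  exact: (occ_ffun (fun i => [set r; gB i])).
exists [ffun i => [set r; gA i]] => [i | ].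
  rewrite !ffunE (@estep_meet _ _ (gA i)) ?is_edge_of ?setU11 ?setU1r ?set11 //.
  by rewrite e_bip gA_A (negbTE rNA).
apply/forallP => u; apply/implyP; rewrite e_bip (negbTE rNA) /= negbK => /gA_onto [i <-].
exact: (occ_ffun (fun i => [set r; gA i])).
Qed.

Lemma cVr_number_bip : cVr_number e (mindeg e).
Proof.
by split=> [|m]; [rewrite mindeg_bip; exact: vr_cops_win_bip | exact: vr_cops_lose_lt_mindeg].
Qed.

Lemma cV_number_bip : cV_number e (maxdeg e).
Proof.
split=> [|m m_lt]; first by rewrite maxdeg_bip; exact: v_cops_win_bip.
by apply: (v_cops_lose_lt_deg (v := a)) => [|O]; rewrite ?deg_bip ?aA -?maxdeg_bip /vstep ?eqxx.
Qed.

Lemma cE_number_bip : cE_number e (maxdeg e).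
Proof.
split=> [|m m_lt]; first by rewrite maxdeg_bip; exact: e_cops_win_bip.
by apply: (e_cops_lose_lt_deg (v := a)) => [|O]; rewrite ?deg_bip ?aA -?maxdeg_bip /vstep ?eqxx.
Qed.

Lemma cEr_number_bip : cEr_number e (maxdeg e).
Proof.
split=> [|m m_lt]; first by rewrite maxdeg_bip; exact: e_cops_win_bip.
by apply: (e_cops_lose_lt_deg (v := a)) => [|O]; rewrite ?deg_bip ?aA -?maxdeg_bip ?eqxx.
Qed.

End CompleteBipartite.
End Graph.

Lemma complete_bipartiteC (T : finType) (e : rel T) (A : {set T}) :
  complete_bipartite e A -> complete_bipartite e (~: A).
Proof.
case=> A_neq0 AC_neq0 e_bip; split; rewrite ?setCK // => x y.
by rewrite !inE e_bip; case: (x \in A); case: (y \in A).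
Qed.

Theorem proposition1 (T : finType) (e : rel T) (A : {set T}) :
  complete_bipartite e A ->
  [/\ c_number e (minn 2 (mindeg e)),
      cVr_number e (mindeg e),
      cV_number e (maxdeg e),
      cEr_number e (maxdeg e) &
      cE_number e (maxdeg e)].
Proof.
move=> G_bip; wlog card_A_le : A G_bip / #|A| <= #|~: A|.
  move=> wlog_A; have [|/ltnW card_AC_le] := leqP #|A| #|~: A|; first exact: wlog_A.
  by apply: (wlog_A (~: A)); rewrite ?setCK //; exact: complete_bipartiteC.
case: G_bip => /set0Pn [a aA] /set0Pn [b]; rewrite inE => bNA e_bip.
split; [exact: c_number_bip e_bip aA bNA card_A_le
      | exact: cVr_number_bip e_bip aA bNA card_A_le
      | exact: cV_number_bip e_bip aA bNA card_A_le
      | exact: cEr_number_bip e_bip aA bNA card_A_le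
      | exact: cE_number_bip e_bip aA bNA card_A_le].
Qed.
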